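(* Let $G$ be a finite group. The poset $\widetilde\Pi(G)$ is isomorphic to $C_2$ if and only if, for some prime $p$, either $G$ is a cyclic group of order $p$, or $G$ is an elementary abelian $p$-group, or $G$ has a subgroup isomorphic to $\mathrm{Heis}(\mathbb{Z}_p)$ and $\exp(G)=p$.
   Context: For a finite group $G$ and a subgroup $H\le G$, let $\pi_e(H)=\{o(x)\mid x\in H\}$. Let $\mathcal{L}(G)$ be the set of subgroups of $G$; define $H_1\equiv H_2$ iff $\pi_e(H_1)=\pi_e(H_2)$, with class $[H]$. The poset $\widetilde\Pi(G)$ is $\mathcal{L}(G)/\!\equiv$ ordered by $[H_1]\lesssim[H_2]$ iff $\pi_e(H_1)\subseteq\pi_e(H_2)$. $C_2$ denotes the chain with two elements. $\exp(G)$ is the exponent of $G$, the least positive integer $m$ with $g^m=e$ for all $g\in G$. For an odd prime $p$, $\mathrm{Heis}(\mathbb{Z}_p)$ denotes the group of upper unitriangular $3\times 3$ matrices over $\mathbb{Z}_p$ (the unique, up to isomorphism, nonabelian group of order $p^3$ and exponent $p$). *)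

From mathcomp Require Import all_boot all_order all_algebra all_fingroup all_solvable.
Set Implicit Arguments. Unset Strict Implicit. Unset Printing Implicit Defensive.
Import GRing.Theory.

Definition pi_e (gT : finGroupType) (H : {set gT}) : pred nat :=
  [pred n | [exists x in H, #[x]%g == n]].

Definition C2_le (a b : bool) : bool := a ==> b.

(* Pi~(G) ~= C_2 : an order isomorphism from the quotient poset
   L(G)/== (ordered by inclusion of pi_e) onto C_2, presented as a map on
   subgroups of G that is surjective and reflects/preserves the preorder
   (hence factors through == and is a poset isomorphism of the quotient). *)
Definition PiTilde_iso_C2 (gT : finGroupType) (G : {group gT}) : Prop :=
  exists f : {group gT} -> bool,
    (forall b : bool, exists H : {group gT}, H \subset G /\ f H = b) /\
    (forall H1 H2 : {group gT}, H1 \subset G -> H2 \subset G ->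
       ({subset pi_e H1 <= pi_e H2} <-> C2_le (f H1) (f H2))).

Definition Heis (p : nat) : {set {'GL_3['F_p]}} :=
  [set g : {'GL_3['F_p]} |
     [forall i : 'I_3, forall j : 'I_3,
        ((j < i)%N ==> (GLval g i j == 0%R)) && ((i == j) ==> (GLval g i j == 1%R))]].

From mathcomp Require Import all_boot all_order all_algebra all_fingroup all_solvable.
From mathcomp Require Import ring.
Set Implicit Arguments. Unset Strict Implicit. Unset Printing Implicit Defensive.
Import GRing.Theory.

(* A map realising Pi~(G) ~= C_2 must send the trivial subgroup to the bottom
   and every other subgroup to the top, so all nontrivial subgroups of G have
   the same element orders: G is nontrivial of prime exponent p. Such a group
   is elementary abelian when it is abelian (in particular when p = 2).
   Otherwise it is a nilpotent group with elements x, y whose commutator is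
   central and nontrivial; <x, y> is then an image of the extraspecial group
   p^{1+2} on which the commutator survives, hence isomorphic to it, and so is
   Heis(Z_p). *)

Local Open Scope group_scope.

Section ElementOrders.

Variable gT : finGroupType.
Implicit Types (G H K : {group gT}) (x : gT).

Lemma mem_pi_e (A : {set gT}) x : x \in A -> #[x] \in pi_e A.
Proof. by move=> Ax; apply/exists_inP; exists x. Qed.

Lemma pi_e1_sub H : {subset pi_e [1 gT] <= pi_e H}.
Proof. by move=> _ /exists_inP[x /set1P -> /eqP <-]; apply: mem_pi_e. Qed.

Lemma pi_e_sub1 H : {subset pi_e H <= pi_e [1 gT]} -> H :=: 1.
Proof.
move=> sH1; apply/trivgP/subsetP => x Hx.
have /exists_inP[_ /set1P -> /eqP] := sH1 _ (mem_pi_e Hx).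
by rewrite order1 => /esym/eqP; rewrite order_eq1 => /eqP ->; apply: set11.
Qed.

Lemma order_prime_exponent G x :
  prime (exponent G) -> x \in G -> x != 1 -> #[x] = exponent G.
Proof.
by move=> prG Gx ntx; apply/(prime_nt_dvdP prG); rewrite ?order_eq1 ?dvdn_exponent.
Qed.

Lemma prime_exponent_pi_e G : G :!=: 1 ->
  prime (exponent G) <->
  (forall H K, H \subset G -> K \subset G -> H :!=: 1 -> {subset pi_e K <= pi_e H}).
Proof.
move=> ntG; split=> [prG H K sHG sKG ntH _ /exists_inP[y Ky /eqP <-] | pi_e_ntG].
  have [-> | nty] := eqVneq y 1; first exact: mem_pi_e (group1 H).
  have [x Hx ntx] := trivgPn _ ntH.
  rewrite (order_prime_exponent prG (subsetP sKG y Ky) nty).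
  by rewrite -(order_prime_exponent prG (subsetP sHG x Hx) ntx) mem_pi_e.
rewrite -cardG_gt1 in ntG; have p_pr := pdiv_prime ntG.
have [x Gx ox] := Cauchy p_pr (pdiv_dvd #|G|).
have ntx : x != 1.
  by rewrite -order_eq1 ox; apply: contraTneq (prime_gt1 p_pr) => ->.
suff -> : exponent G = pdiv #|G| by [].
apply/eqP; rewrite eqn_dvd -{2}ox dvdn_exponent // andbT.
apply/exponentP => y Gy; apply/eqP; rewrite -order_dvdn -ox.
have /exists_inP[z Xz /eqP <-] : #[y] \in pi_e <[x]>.
  apply: pi_e_ntG (mem_pi_e (cycle_id y)); rewrite ?cycle_subG ?cycle_eq1 //.
by rewrite orderE order_dvdG.
Qed.

Lemma PiTilde_iso_C2P G : PiTilde_iso_C2 G <-> G :!=: 1 /\ prime (exponent G).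
Proof.
split=> [[f [f_onto f_mono]] | [ntG prG]].
  have f1 : f 1%G = false.
    have [H [sHG fH]] := f_onto false.
    have := (f_mono _ _ (sub1G G) sHG).1 (pi_e1_sub H).
    by rewrite /C2_le fH implybF => /negbTE.
  have fE K : K \subset G -> f K = (K :!=: 1).
    move=> sKG; apply/idP/idP => [fK | ntK].
      apply: contraL fK => /eqP K1; have := (f_mono K 1%G sKG (sub1G G)).1.
      by rewrite f1 /C2_le implybF; apply; rewrite K1.
    apply: contraR ntK => /negbTE fK; apply/eqP/pi_e_sub1.
    by apply/(f_mono K 1%G sKG (sub1G G)); rewrite fK f1.
  have [H [sHG]] := f_onto true; rewrite fE // => ntH.
  split; first exact: subG1_contra sHG ntH.
  apply/(prime_exponent_pi_e (subG1_contra sHG ntH)) => H' K sH'G sKG ntH'.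
  by apply/(f_mono K H' sKG sH'G); rewrite /C2_le (fE H') ?ntH' ?implybT.
exists (fun H => H :!=: 1); split.
  by case; [exists G | exists 1%G]; rewrite ?sub1G ?eqxx.
move=> H K sHG sKG; rewrite /C2_le; split=> [sHK | /implyP ntHK].
  apply/implyP => ntH; apply: contra ntH => /eqP K1.
  by apply/eqP/pi_e_sub1; rewrite -K1.
have [/eqP-> | ntH] := boolP (H :==: 1); first exact: pi_e1_sub.
exact: (prime_exponent_pi_e ntG).1 prG K H sKG sHG (ntHK ntH).
Qed.

End ElementOrders.

Lemma injm_extraspecial (gT rT : finGroupType) (E : {group gT})
    (f : {morphism E >-> rT}) :
  nilpotent E -> extraspecial E -> f @* E^`(1) != 1 -> 'injm f.
Proof.
move=> nilE [[_ defE'] prZ]; apply: contraR; rewrite subG1 => ntK.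
have sZK : 'Z(E) \subset 'ker f.
  have := meet_center_nil nilE (ker_normal f) ntK.
  by apply: contraLR => nsZK; rewrite negbK setIC prime_TIg.
by rewrite -subG1 /= defE' -(morphim_ker f) morphimS.
Qed.

Section ExtraspecialSubgroups.

Variables (gT : finGroupType) (p : nat).
Hypothesis p_pr : prime p.

Lemma pX1p2_isog_joing (x y : gT) :
  x ^+ p = 1 -> y ^+ p = 1 -> commute [~ x, y] x -> commute [~ x, y] y ->
  [~ x, y] != 1 -> p^{1+2} \isog <[x]> <*> <[y]>.
Proof.
move=> xp yp cxyx cxyy ntxy.
have : (<[x]> <*> <[y]>)%G \homg p^{1+2}.
  rewrite (Grp_pX1p2 p_pr); apply/existsP; exists (x, y).
  by rewrite /= !xpair_eqE /= xp yp !eqxx; apply/and5P; split=> //; apply/commgP.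
case/homgP=> f imf; apply/isogP; exists f => //.
have esP := pX1p2_extraspecial p_pr.
apply: injm_extraspecial (pgroup_nil (pX1p2_pgroup p_pr)) esP _.
rewrite morphim_der // imf; apply/trivgPn; exists [~ x, y] => //.
by rewrite mem_commg // mem_gen // inE cycle_id ?orbT.
Qed.

Lemma nil_central_commutator (G : {group gT}) :
  nilpotent G -> ~~ abelian G ->
  exists x y, [/\ x \in G, y \in G, [~ x, y] \in 'Z(G) & [~ x, y] != 1].
Proof.
move=> nilG ncGG.
have nZG := normal_norm (center_normal G).
have [y Z2y nZy] : exists2 y, y \in 'Z_2(G) & y \notin 'Z(G).
  apply/subsetPn; rewrite -quotient_sub1 ?(subset_trans (ucn_sub 2 G)) //.
  have := ucn_central 1 G; rewrite ucn1 => ->.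
  rewrite subG1 center_nil_eq1 ?quotient_nil // -subG1 quotient_sub1 //.
  by apply: contra ncGG; rewrite subsetI subxx.
have Gy := subsetP (ucn_sub 2 G) y Z2y.
have /exists_inP[x Gx ntyx] : [exists x in G, [~ y, x] != 1].
  apply: contraR nZy => /exists_inPn cGy; apply/centerP; split=> // x Gx.
  by apply/commgP; have := cGy x Gx; rewrite negbK.
exists y, x; split=> //; rewrite -ucn1.
exact: subsetP (ucn_comm 1 G) _ (mem_commg Z2y Gx).
Qed.

Lemma exponent_prime_nonabelian_pX1p2 (G : {group gT}) :
  exponent G = p -> ~~ abelian G ->
  exists2 H : {group gT}, H \subset G & p^{1+2} \isog H.
Proof.
move=> eG ncGG.
have nilG : nilpotent G.
  by apply: (@pgroup_nil _ p); rewrite -pnat_exponent eG pnat_id.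
have [x [y [Gx Gy /centerP[_ cGxy] ntxy]]] := nil_central_commutator nilG ncGG.
have expGp z : z \in G -> z ^+ p = 1 by rewrite -eG; apply: expg_exponent.
exists (<[x]> <*> <[y]>)%G; first by rewrite join_subG !cycle_subG Gx.
by apply: pX1p2_isog_joing; rewrite ?expGp //; apply: cGxy.
Qed.

End ExtraspecialSubgroups.

Section Heisenberg.

Variable p : nat.
Local Notation F := 'F_p.
Local Open Scope ring_scope.

Definition heis_mx (a b c : F) : 'M[F]_3 :=
  \matrix_(i, j)
    match nat_of_ord i, nat_of_ord j with
    | 0, 0 | 1, 1 | 2, 2 => 1
    | 0, 1 => a | 1, 2 => b | 0, 2 => c
    | _, _ => 0
    end.

Lemma heis_mxM a b c a' b' c' :
  heis_mx a b c *m heis_mx a' b' c' = heis_mx (a + a') (b + b') (c + a * b' + c').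
Proof.
apply/matrixP => i j; rewrite !mxE !big_ord_recr big_ord0 /= !mxE.
by case: i => [[|[|[|i]]] ?] //; case: j => [[|[|[|j]]] ?] //=; ring.
Qed.

Lemma heis_mx0 : heis_mx 0 0 0 = 1%:M.
Proof.
apply/matrixP => i j; rewrite !mxE.
by case: i => [[|[|[|i]]] ?] //; case: j => [[|[|[|j]]] ?].
Qed.

Lemma heis_mx_unit a b c : heis_mx a b c \in unitmx.
Proof.
have [|//] := @mulmx1_unit _ _ (heis_mx a b c) (heis_mx (- a) (- b) (a * b - c)).
by rewrite heis_mxM -heis_mx0; congr heis_mx; ring.
Qed.

Definition heis a b c : {'GL_3[F]} := Sub (heis_mx a b c) (heis_mx_unit a b c).

Lemma heisM a b c a' b' c' :
  (heis a b c * heis a' b' c')%g = heis (a + a') (b + b') (c + a * b' + c').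
Proof. exact/val_inj/heis_mxM. Qed.

Lemma heis0 : heis 0 0 0 = 1%g.
Proof. exact/val_inj/heis_mx0. Qed.

Lemma heisV a b c : (heis a b c)^-1%g = heis (- a) (- b) (a * b - c).
Proof.
by apply/eqP; rewrite eq_invg_mul heisM -heis0; apply/eqP; congr heis; ring.
Qed.

Lemma heisX a b n : a * b = 0 -> (heis a b 0 ^+ n)%g = heis (a *+ n) (b *+ n) 0.
Proof.
move=> ab0; elim: n => [|n IHn]; first by rewrite expg0 !mulr0n heis0.
by rewrite expgSr IHn heisM mulrnAl ab0 mul0rn add0r addr0 -!mulrSr.
Qed.

Lemma heis_inj a b c a' b' c' :
  heis a b c = heis a' b' c' -> (a, b, c) = (a', b', c').
Proof.
move/(congr1 (fun g : {'GL_3[F]} => val g)) => /matrixP E.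
by have := E 0 1; have := E 1 2; have := E 0 2; rewrite !mxE /= => -> -> ->.
Qed.

Lemma HeisE : Heis p = [set heis t.1.1 t.1.2 t.2 | t in [set: F * F * F]].
Proof.
apply/setP => g; rewrite inE.
apply/idP/imsetP => [/forallP Hg | [[[a b] c] _ ->]].
  exists (val g 0 1, val g 1 2, val g 0 2); rewrite ?inE //.
  apply/val_inj/matrixP => i j; rewrite mxE.
  have /andP[/implyP g0 /implyP g1] := forallP (Hg i) j.
  case: i g0 g1 => [[|[|[|i]]] ?] //; case: j => [[|[|[|j]]] ?] //= g0 g1;
    by [apply/eqP/g1 | apply/eqP/g0 | congr (val g _ _); apply: val_inj].
apply/forallP => i; apply/forallP => j; rewrite !mxE.
by case: i => [[|[|[|i]]] ?] //; case: j => [[|[|[|j]]] ?].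
Qed.

Lemma mem_heis a b c : heis a b c \in Heis p.
Proof. by rewrite HeisE; apply/imsetP; exists (a, b, c). Qed.

Lemma Heis_group_set : group_set (Heis p).
Proof.
apply/group_setP; split=> [|x y]; first by rewrite -heis0 mem_heis.
rewrite HeisE => /imsetP[[[a b] c] _ ->] /imsetP[[[a' b'] c'] _ ->].
by rewrite heisM -HeisE mem_heis.
Qed.

Canonical Heis_group := group Heis_group_set.

Hypothesis p_pr : prime p.

Lemma card_Heis : #|Heis p| = (p ^ 3)%N.
Proof.
rewrite HeisE card_imset => [|[[a b] c] [[a' b'] c'] /heis_inj //].
by rewrite cardsT !card_prod card_Fp // -mulnA.
Qed.

Lemma pX1p2_isog_Heis : p^{1+2} \isog Heis p.
Proof.
pose u := heis 1 0 0; pose v := heis 0 1 0.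
have uvE : [~ u, v]%g = heis 0 0 1.
  by rewrite /commg /conjg !heisV !heisM; congr heis; ring.
have expp (a b : F) : a * b = 0 -> (heis a b 0 ^+ p)%g = 1%g.
  by move=> ab0; rewrite heisX // !(mulrn_pchar (pchar_Fp p_pr)) heis0.
have isoUV : p^{1+2} \isog <[u]> <*> <[v]>.
  apply: pX1p2_isog_joing; rewrite ?expp ?mulr0 ?mul0r ?uvE //.
  - by rewrite /commute !heisM; congr heis; ring.
  - by rewrite /commute !heisM; congr heis; ring.
  by rewrite -heis0; apply/eqP => /heis_inj [] /eqP; rewrite oner_eq0.
suff -> : Heis p = (<[u]> <*> <[v]>)%g by [].
apply/eqP; rewrite eq_sym eqEcard card_Heis -(card_isog isoUV) card_pX1p2 //.
by rewrite join_subG !cycle_subG leqnn andbT; apply/andP; split; apply: mem_heis.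
Qed.

End Heisenberg.

Theorem theorem2p2 (gT : finGroupType) (G : {group gT}) :
  PiTilde_iso_C2 G <->
  exists p : nat, prime p /\
    [\/ cyclic G /\ #|G| = p,
        (p.-abelem G)%g /\ G :!=: 1%G
      | (exists H : {group gT}, [/\ H \subset G, odd p & Heis p \isog H])
        /\ exponent G = p].
Proof.
rewrite PiTilde_iso_C2P; split=> [[ntG prG] | [p [p_pr]]].
  exists (exponent G); split=> //.
  have [cGG | ncGG] := boolP (abelian G).
    by apply: Or32; rewrite abelemE // cGG dvdnn.
  have [e2 | odd_e] := even_prime prG.
    by case/negP: ncGG; apply: abelem_abelian (exponent2_abelem _); rewrite e2.
  apply: Or33; split=> //.
  have [H sHG isoH] := exponent_prime_nonabelian_pX1p2 prG (erefl _) ncGG.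
  exists H; split=> //.
  exact: isog_trans (isog_symr (pX1p2_isog_Heis prG)) isoH.
case=> [[cycG oG] | [abG ntG] | [_ eG]].
- by rewrite -cardG_gt1 exponent_cyclic // oG prime_gt1.
- move: abG; rewrite abelemE // => /andP[_ eGp]; split=> //.
  suff -> : exponent G = p by [].
  by apply/(prime_nt_dvdP p_pr) => //; rewrite -dvdn1 -trivg_exponent.
- by rewrite trivg_exponent eG dvdn1 gtn_eqF ?prime_gt1.
Qed.
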